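(* Let $n\ge 7$ and let $CU_n$ be the set of chemical unicyclic graphs on $n$ vertices. Define the following subsets of $CU_n$ (in each, all $m_{i,j}$ not listed are $0$): $\alpha_1$: $n_2=n$ (all vertices of degree 2) and $m_{2,2}=n$; $\alpha_2$: $n_4=0,n_3=1,n_2=n-2,n_1=1$, $m_{1,3}=1$, $m_{2,3}=2$, $m_{2,2}=n-3$; $\alpha_3$: $n_4=0,n_3=1,n_2=n-2,n_1=1$, $m_{1,2}=1$, $m_{2,3}=3$, $m_{2,2}=n-4$; $\alpha_9$: $n_4=0,n_3=2,n_2=n-4,n_1=2$, $m_{1,2}=2$, $m_{2,3}=4$, $m_{3,3}=1$, $m_{2,2}=n-7$. Let $G_1\in\alpha_1$, $G_2\in\alpha_3$, $G_3\in\alpha_2$, $G_4\in\alpha_9$, and let $G\in CU_n$ not belong to $\alpha_1\cup\alpha_2\cup\alpha_3\cup\alpha_9$. Then $SO(G_1)<SO(G_2)<SO(G_3)<SO(G_4)<SO(G)$.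
   Context: All graphs are simple and connected. A chemical graph is a graph with maximum degree at most $4$; a unicyclic graph is a connected graph with $n$ vertices and $n$ edges. $d_G(u)$ is the degree of $u$, $n_i$ the number of vertices of degree $i$, and $m_{i,j}$ the number of edges joining a vertex of degree $i$ to a vertex of degree $j$. The Sombor index is $SO(G)=\sum_{uv\in E(G)}\sqrt{d_G(u)^2+d_G(v)^2}$. *)

From mathcomp Require Import all_boot all_order all_algebra.
From mathcomp Require Import reals.
Set Implicit Arguments. Unset Strict Implicit. Unset Printing Implicit Defensive.
Import Order.TTheory GRing.Theory Num.Theory.

Section Graphs.
Variable n : nat.
Implicit Type e : rel 'I_n.

Definition simple_graph e := symmetric e /\ irreflexive e.
Definition connected_graph e := forall x y : 'I_n, connect e x y.

Definition deg e (u : 'I_n) : nat := #|[set v | e u v]|.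

(* edge set: unordered pairs represented as ordered pairs u < v *)
Definition edges e : {set 'I_n * 'I_n} := [set p : 'I_n * 'I_n | (p.1 < p.2)%N && e p.1 p.2].
Definition nedges e : nat := #|edges e|.

Definition nv e (i : nat) : nat := #|[set u | deg e u == i]|.

Definition medges e (i j : nat) : nat :=
  #|[set p in edges e | ((deg e p.1 == i) && (deg e p.2 == j))
                      || ((deg e p.1 == j) && (deg e p.2 == i))]|.

Definition max_deg_le4 e := forall u, (deg e u <= 4)%N.

Definition chem_unicyclic e :=
  [/\ simple_graph e, connected_graph e, nedges e = n & max_deg_le4 e].

Definition sombor (R : realType) e : R :=
  \sum_(p in edges e) Num.sqrt (((deg e p.1) ^ 2 + (deg e p.2) ^ 2)%N%:R).

Definition alpha1 e :=
  nv e 2 = n /\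
  forall i j, (i <= j)%N -> medges e i j = if (i, j) == (2, 2) then n else 0.

Definition alpha2 e :=
  [/\ nv e 4 = 0, nv e 3 = 1, nv e 2 = n - 2, nv e 1 = 1 &
  forall i j, (i <= j)%N -> medges e i j =
    if (i, j) == (1, 3) then 1 else if (i, j) == (2, 3) then 2
    else if (i, j) == (2, 2) then n - 3 else 0].

Definition alpha3 e :=
  [/\ nv e 4 = 0, nv e 3 = 1, nv e 2 = n - 2, nv e 1 = 1 &
  forall i j, (i <= j)%N -> medges e i j =
    if (i, j) == (1, 2) then 1 else if (i, j) == (2, 3) then 3
    else if (i, j) == (2, 2) then n - 4 else 0].

Definition alpha9 e :=
  [/\ nv e 4 = 0, nv e 3 = 2, nv e 2 = n - 4, nv e 1 = 2 &
  forall i j, (i <= j)%N -> medges e i j =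
    if (i, j) == (1, 2) then 2 else if (i, j) == (2, 3) then 4
    else if (i, j) == (3, 3) then 1
    else if (i, j) == (2, 2) then n - 7 else 0].

End Graphs.

From HB Require Import structures.
From mathcomp Require Import all_boot all_order all_algebra.
From mathcomp Require Import reals.
From mathcomp Require Import lra zify.
Import Order.TTheory GRing.Theory Num.Theory.
Set Implicit Arguments. Unset Strict Implicit. Unset Printing Implicit Defensive.

(* A unicyclic graph has as many edges as vertices, so
   SO(G) = n * sqrt 8 + sum_(i <= j) m_ij * (sqrt (i^2 + j^2) - sqrt 8),
   and only the excess of the edges over the (2,2)-weight sqrt 8 matters.
   No edge joins two leaves, and the excess of every other edge is at least the sum
   of the shares -3/5, 0, 7/10, 7/5 of its endpoints (indexed by their degree).
   By the handshake lemma the shares add up to -3/5 n1 + 21/10 n3 + 28/5 n4, and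
   n1 = n3 + 2 n4 turns this into 3/2 n3 + 22/5 n4, which beats the excess of
   alpha_9 (about 3.4) as soon as n4 >= 1 or n3 >= 3.  In the remaining cases
   n4 = 0 and n3 <= 2, the degree relations force G into alpha_1, alpha_2, alpha_3,
   alpha_9, or one of five profiles with n3 = 2 that are compared with alpha_9
   numerically; the chain between the four classes is numerical as well. *)

Definition joins (i j a b : nat) := ((a == i) && (b == j)) || ((a == j) && (b == i)).

Definition deg_pairs : seq (nat * nat) :=
  [:: (1, 1); (1, 2); (1, 3); (1, 4); (2, 2); (2, 3); (2, 4); (3, 3); (3, 4); (4, 4)].

Lemma sum_deg_pairs_joins (V : nmodType) (F : nat -> nat -> V) a b :
  (forall a b, F a b = F b a) -> 0 < a <= 4 -> 0 < b <= 4 ->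
  (\sum_(ij <- deg_pairs) F ij.1 ij.2 *+ joins ij.1 ij.2 a b)%R = F a b.
Proof.
move=> Fsym; rewrite !big_cons big_nil.
by case: a b => [|[|[|[|[|a]]]]] [|[|[|[|[|b]]]]] //= _ _;
  rewrite ?mulr0n ?mulr1n ?addr0 ?add0r // Fsym.
Qed.

Lemma sum_degrees_eq (V : nmodType) (F : nat -> V) a :
  0 < a <= 4 -> (\sum_(d <- [:: 1; 2; 3; 4]%N) F d *+ (a == d))%R = F a.
Proof.
rewrite !big_cons big_nil.
by case: a => [|[|[|[|[|a]]]]] //= _; rewrite ?mulr0n ?mulr1n ?addr0 ?add0r.
Qed.

Section SimpleGraph.
Variables (n : nat) (e : rel 'I_n).

Lemma sum_edges_endpoints (V : nmodType) (f : 'I_n -> V) : simple_graph e ->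
  (\sum_(p in edges e) (f p.1 + f p.2) = \sum_u f u *+ deg e u)%R.
Proof.
case=> esym eirr.
have swap : (\sum_(p in edges e) f p.2 = \sum_(p | e p.1 p.2 && (p.2 < p.1)%N) f p.1)%R.
  rewrite (reindex (fun p : 'I_n * 'I_n => (p.2, p.1))) /=; last first.
    by exists (fun p => (p.2, p.1)) => -[].
  by apply: eq_bigl => -[u v]; rewrite inE /= esym andbC.
under [RHS]eq_bigr => u _ do rewrite /deg -sumr_const.
rewrite big_split /= swap pair_big_dep.
rewrite [RHS](bigID (fun p : 'I_n * 'I_n => (p.1 < p.2)%N)) /=.
congr (_ + _)%R; apply: eq_bigl => -[u v]; rewrite !inE /= andbC //.
by case: (ltngtP u v) => [_|_|/val_inj <-] /=; rewrite ?andbF ?andbT ?eirr.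
Qed.

Lemma leaf_neighbor u v w : deg e u = 1 -> e u v -> e u w -> w = v.
Proof.
move=> /eqP/cards1P[z Nu] euv euw.
have : v \in [set x | e u x] by rewrite inE.
have : w \in [set x | e u x] by rewrite inE.
by rewrite Nu !inE => /eqP -> /eqP ->.
Qed.

Lemma medgesE i j :
  medges e i j = \sum_(p in edges e) joins i j (deg e p.1) (deg e p.2).
Proof.
rewrite /medges -sum1_card big_mkcond [RHS]big_mkcond /=.
by apply: eq_bigr => p _; rewrite inE; case: (p \in edges e); rewrite /joins; case: (_ || _).
Qed.

Lemma nvE d : nv e d = \sum_u (deg e u == d).
Proof.
rewrite /nv -sum1_card big_mkcond /=.
by apply: eq_bigr => u _; rewrite inE; case: (_ == d).
Qed.

Lemma medges_diag_le d : medges e d d <= 'C(nv e d, 2).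
Proof.
set S := [set u | deg e u == d].
pose pair_set (p : 'I_n * 'I_n) := [set p.1; p.2].
have pair_set_inj : {in edges e &, injective pair_set}.
  move=> [u v] [u' v']; rewrite !inE /= => /andP[uv _] /andP[uv' _] /setP eqS.
  have := eqS u; have := eqS v; have := eqS u'; rewrite !inE !eqxx /= ?orbT.
  move=> h1 h2 h3; apply/eqP; rewrite xpair_eqE -!val_eqE /=.
  by move: h1 h2 h3; rewrite -!val_eqE /=; lia.
rewrite /nv -/S -cards_draws /medges.
set M := [set p in edges e | _].
rewrite -(card_in_imset (f := pair_set) (D := M)); last first.
  by move=> p q /setIdP[pE _] /setIdP[qE _]; apply: pair_set_inj.
apply/subset_leq_card/subsetP => A /imsetP[p /setIdP[pE dd] ->].
move: pE dd; rewrite !inE orbb => /andP[lt_p _] /andP[d1 d2].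
rewrite cards2 -val_eqE /= (ltn_eqF lt_p) andbT.
by apply/subsetP => u; rewrite !inE => /orP[]/eqP->.
Qed.

End SimpleGraph.

Section ChemicalUnicyclic.
Variables (n : nat) (e : rel 'I_n).
Hypotheses (e_chem : chem_unicyclic e) (n_gt2 : 2 < n).
Local Notation D := (deg e).

Lemma deg_le4 u : D u <= 4.
Proof. by case: e_chem => _ _ _; apply. Qed.

Lemma deg_gt0 u : 0 < D u.
Proof.
case: e_chem => _ e_conn _ _.
have /card_gt0P[v v_ne_u] : 0 < #|predC1 u| by rewrite cardC1 card_ord; lia.
case/connectP: (e_conn u v) => -[|x p] /=.
  by move=> _ v_u; rewrite inE v_u eqxx in v_ne_u.
by case/andP=> eux _ _; apply/card_gt0P; exists x; rewrite inE.
Qed.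

Lemma leaves_not_adjacent p : p \in edges e -> ~~ ((D p.1 == 1) && (D p.2 == 1)).
Proof.
case: e_chem => -[esym _] e_conn _ _.
rewrite inE => /andP[_ e12]; apply/negP => /andP[/eqP leaf1 /eqP leaf2].
set A := [set p.1; p.2].
have stay x y : e x y -> x \in A -> y \in A.
  move=> exy; rewrite !inE => /orP[]/eqP xE; rewrite {}xE in exy.
  - by rewrite (leaf_neighbor leaf1 e12 exy) eqxx orbT.
  - have e21 : e p.2 p.1 by rewrite esym.
    by rewrite (leaf_neighbor leaf2 e21 exy) eqxx.
have A_closed : closed e (mem A).
  by move=> x y exy; apply/idP/idP; apply: stay; rewrite // esym.
have /card_gt0P[w w_notA] : 0 < #|~: A|.
  by have := cardsC A; rewrite cards2 card_ord; case: (_ != _) => /=; lia.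
have := closed_connect A_closed (e_conn p.1 w).
by rewrite !inE eqxx /=; move: w_notA; rewrite !inE => /norP[/negbTE-> /negbTE->].
Qed.

Lemma sum_edges_by_class (V : nmodType) (F : nat -> nat -> V) :
  (forall a b, F a b = F b a) ->
  (\sum_(p in edges e) F (D p.1) (D p.2) =
   \sum_(ij <- deg_pairs) F ij.1 ij.2 *+ medges e ij.1 ij.2)%R.
Proof.
move=> Fsym.
under [RHS]eq_bigr => ij _ do rewrite medgesE -sumrMnr.
rewrite exchange_big /=; apply: eq_bigr => p _.
by rewrite sum_deg_pairs_joins ?deg_gt0 ?deg_le4.
Qed.

Lemma sum_vertices_by_class (V : nmodType) (F : nat -> V) :
  (\sum_u F (D u) = \sum_(d <- [:: 1; 2; 3; 4]%N) F d *+ nv e d)%R.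
Proof.
under [RHS]eq_bigr => d _ do rewrite nvE -sumrMnr.
rewrite exchange_big /=; apply: eq_bigr => u _.
by rewrite sum_degrees_eq ?deg_gt0 ?deg_le4.
Qed.

Lemma handshake_by_class d :
  (\sum_(ij <- deg_pairs) ((ij.1 == d) + (ij.2 == d))%N *+ medges e ij.1 ij.2)%R =
  d * nv e d.
Proof.
rewrite -(sum_edges_by_class (F := fun a b => ((a == d) + (b == d))%N)); last first.
  by move=> a b; rewrite addnC.
rewrite (sum_edges_endpoints (fun u => (D u == d) : nat)); last by case: e_chem.
by rewrite nvE big_distrr; apply: eq_bigr => u _; case: eqP => [->|_] /=; lia.
Qed.

Lemma medges_leaf_leaf : medges e 1 1 = 0.
Proof.
apply: eq_card0 => p; apply/negP => /setIdP[pE]; rewrite orbb; apply/negP.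
exact: leaves_not_adjacent.
Qed.

Lemma medges_out i j : ~~ ((0 < i <= 4) && (0 < j <= 4)) -> medges e i j = 0.
Proof.
move=> ij_out; apply: eq_card0 => p; apply/negP => /setIdP[_].
by move: ij_out (deg_gt0 p.1) (deg_le4 p.1) (deg_gt0 p.2) (deg_le4 p.2); lia.
Qed.

Lemma degree_profile :
  [/\ medges e 1 1 = 0,
      medges e 1 2 + medges e 1 3 + medges e 1 4 = nv e 1,
      medges e 1 2 + 2 * medges e 2 2 + medges e 2 3 + medges e 2 4 = 2 * nv e 2,
      medges e 1 3 + medges e 2 3 + 2 * medges e 3 3 + medges e 3 4 = 3 * nv e 3 &
    [/\ medges e 1 4 + medges e 2 4 + medges e 3 4 + 2 * medges e 4 4 = 4 * nv e 4,
        nv e 1 + nv e 2 + nv e 3 + nv e 4 = n &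
        medges e 1 2 + medges e 1 3 + medges e 1 4 + medges e 2 2 + medges e 2 3
          + medges e 2 4 + medges e 3 3 + medges e 3 4 + medges e 4 4 = n]].
Proof.
have := handshake_by_class 1; have := handshake_by_class 2.
have := handshake_by_class 3; have := handshake_by_class 4.
have := sum_vertices_by_class (fun _ => 1%N); rewrite sum1_card card_ord.
have := sum_edges_by_class (F := fun _ _ => 1%N) (fun _ _ => erefl).
case: e_chem => _ _ nE _; rewrite sum1_card [#|_|]nE !big_cons !big_nil /= medges_leaf_leaf.
move=> mT vT h4 h3 h2 h1; by do !split; lia.
Qed.

Lemma medges_eq_spec (f : nat -> nat -> nat) :
  (forall i j, i <= j -> ~~ ((0 < i) && (j <= 4)) -> f i j = 0) ->
  (forall i j, i <= j -> 0 < i -> j <= 4 -> medges e i j = f i j) ->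
  forall i j, i <= j -> medges e i j = f i j.
Proof.
move=> f_out f_in i j ij.
have [/andP[i_gt0 j_le4] | ij_out] := boolP ((0 < i) && (j <= 4)); first exact: f_in.
by rewrite f_out // medges_out //; move: ij_out ij; lia.
Qed.

Lemma not_alpha_profile :
  ~ (alpha1 e \/ alpha2 e \/ alpha3 e \/ alpha9 e) ->
  (0 < nv e 4) || (2 < nv e 3) \/
  [/\ nv e 4 = 0, nv e 3 = 2 & ~ (medges e 3 3 = 1 /\ medges e 1 3 = 0)].
Proof.
move=> not_alpha; have [|] := boolP ((0 < nv e 4) || (2 < nv e 3)); first by left.
rewrite negb_or -!leqNgt => /andP[v4 v3]; right.
have [m11 h1 h2 h3 [h4 hv hm]] := degree_profile.
have [v3_le1 | v3_2] : nv e 3 <= 1 \/ nv e 3 = 2 by lia.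
  have m33 : medges e 3 3 = 0 by move: (medges_diag_le e 3); rewrite bin_small; lia.
  exfalso; apply: not_alpha.
  have [v3_0 | v3_1] : nv e 3 = 0 \/ nv e 3 = 1 by lia.
    left; split; first by lia.
    by apply: medges_eq_spec => -[|[|[|[|[|i]]]]] [|[|[|[|[|j]]]]] //=; lia.
  have [m13_1 | m13_0] : medges e 1 3 = 1 \/ medges e 1 3 = 0 by lia.
    right; left; split; try lia.
    by apply: medges_eq_spec => -[|[|[|[|[|i]]]]] [|[|[|[|[|j]]]]] //=; lia.
  right; right; left; split; try lia.
  by apply: medges_eq_spec => -[|[|[|[|[|i]]]]] [|[|[|[|[|j]]]]] //=; lia.
split; [lia | by [] | move=> [m33_1 m13_0]].
apply: not_alpha; right; right; right; split; try lia.
by apply: medges_eq_spec => -[|[|[|[|[|i]]]]] [|[|[|[|[|j]]]]] //=; lia.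
Qed.

End ChemicalUnicyclic.

Local Open Scope ring_scope.

Lemma sqr_le_sqrtr (F : rcfType) (x q : F) : 0 <= q -> q ^+ 2 <= x -> q <= Num.sqrt x.
Proof. by move=> q_ge0 qx; rewrite -[q]ger0_norm // -sqrtr_sqr ler_wsqrtr. Qed.

Lemma sqrtr_le_sqr (F : rcfType) (x q : F) : 0 <= q -> x <= q ^+ 2 -> Num.sqrt x <= q.
Proof. by move=> q_ge0 xq; rewrite -[q in _ <= q]ger0_norm // -sqrtr_sqr ler_wsqrtr. Qed.

(* Locked so that [lra] treats the weights as atoms instead of unfolding them. *)
HB.lock Definition weight (R : realType) (a b : nat) : R := Num.sqrt (a ^ 2 + b ^ 2)%N%:R.

Section Excess.
Variable R : realType.
Local Notation weight := (weight R).

Definition excess (a b : nat) : R := weight a b - weight 2 2.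

Definition excess_profile (m : nat -> nat -> nat) : R :=
  \sum_(ij <- deg_pairs) excess ij.1 ij.2 *+ m ij.1 ij.2.

Definition share (d : nat) : R :=
  match d with 1 => - (3 / 5) | 3 => 7 / 10 | 4 => 7 / 5 | _ => 0 end.

Lemma excess_sym a b : excess a b = excess b a.
Proof. by rewrite /excess unlock addnC. Qed.

Lemma weight_bounds :
  (223 / 100 <= weight 1 2 <= 224 / 100) /\ (316 / 100 <= weight 1 3 <= 317 / 100) /\
  412 / 100 <= weight 1 4 /\ (282 / 100 <= weight 2 2 <= 283 / 100) /\
  (360 / 100 <= weight 2 3 <= 361 / 100) /\ 447 / 100 <= weight 2 4 /\
  (424 / 100 <= weight 3 3 <= 425 / 100) /\ 5 <= weight 3 4 /\ 565 / 100 <= weight 4 4.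
Proof. by rewrite unlock /= !sqr_le_sqrtr ?sqrtr_le_sqr //; lra. Qed.

Lemma excess_ge_shares a b : (0 < a <= 4)%N -> (0 < b <= 4)%N ->
  ~~ ((a == 1%N) && (b == 1%N)) -> share a + share b <= excess a b.
Proof.
wlog le_ab : a b / (a <= b)%N => [hwlog a_range b_range not11 | ].
  have [/hwlog-> // | /ltnW le_ba] := leqP a b.
  by rewrite addrC excess_sym hwlog // andbC.
by case: a b le_ab => [|[|[|[|[|a]]]]] [|[|[|[|[|b]]]]] //= _ _ _ _;
  have := weight_bounds; rewrite /excess; lra.
Qed.

Lemma excess_alpha_chain :
  [/\ 0 < excess 1 2 + excess 2 3 *+ 3,
      excess 1 2 + excess 2 3 *+ 3 < excess 1 3 + excess 2 3 *+ 2 &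
      excess 1 3 + excess 2 3 *+ 2 < excess 1 2 *+ 2 + excess 2 3 *+ 4 + excess 3 3].
Proof. by split; have := weight_bounds; rewrite /excess; lra. Qed.

Lemma excess_profile_two_branches (m : nat -> nat -> nat) :
  [/\ m 1 1 = 0, m 1 4 = 0, m 2 4 = 0, m 3 4 = 0 & m 4 4 = 0]%N ->
  (m 1 2 + m 1 3 = 2)%N -> (m 1 3 + m 2 3 + 2 * m 3 3 = 6)%N -> (m 3 3 <= 1)%N ->
  ~ (m 3 3 = 1 /\ m 1 3 = 0)%N ->
  excess 1 2 *+ 2 + excess 2 3 *+ 4 + excess 3 3 < excess_profile m.
Proof.
rewrite /excess_profile !big_cons big_nil => -[-> -> -> -> ->] h12 h23 h33 not_alpha9.
have [m12_le2 m13_le2 m23_le6] : [/\ m 1 2 <= 2, m 1 3 <= 2 & m 2 3 <= 6]%N by split; lia.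
move: (m 1 2) (m 1 3) (m 2 3) (m 3 3) h12 h23 h33 not_alpha9 m12_le2 m13_le2 m23_le6.
case=> [|[|[|?]]] [|[|[|?]]] [|[|[|[|[|[|[|?]]]]]]] [|[|?]] //= *; try (exfalso; lia).
all: have := weight_bounds; rewrite /excess; lra.
Qed.

End Excess.

Section SomborExcess.
Variables (R : realType) (n : nat) (e : rel 'I_n).

Lemma excess_profile_alpha1 : alpha1 e -> excess_profile R (medges e) = 0.
Proof.
case=> _ spec; rewrite /excess_profile !big_cons big_nil !spec //=.
by rewrite /excess subrr !(mulr0n, mul0rn, addr0).
Qed.

Lemma excess_profile_alpha2 :
  alpha2 e -> excess_profile R (medges e) = excess R 1 3 + excess R 2 3 *+ 2.
Proof.
case=> _ _ _ _ spec; rewrite /excess_profile !big_cons big_nil !spec //=.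
by rewrite [excess R 2 2]subrr !(mulr0n, mul0rn, addr0, add0r, mulr1n).
Qed.

Lemma excess_profile_alpha3 :
  alpha3 e -> excess_profile R (medges e) = excess R 1 2 + excess R 2 3 *+ 3.
Proof.
case=> _ _ _ _ spec; rewrite /excess_profile !big_cons big_nil !spec //=.
by rewrite [excess R 2 2]subrr !(mulr0n, mul0rn, addr0, add0r, mulr1n).
Qed.

Lemma excess_profile_alpha9 : alpha9 e ->
  excess_profile R (medges e) = excess R 1 2 *+ 2 + excess R 2 3 *+ 4 + excess R 3 3.
Proof.
case=> _ _ _ _ spec; rewrite /excess_profile !big_cons big_nil !spec //=.
by rewrite [excess R 2 2]subrr !(mulr0n, mul0rn, addr0, add0r, mulr1n) addrA.
Qed.

Hypotheses (e_chem : chem_unicyclic e) (n_gt2 : (2 < n)%N).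
Local Notation D := (deg e).

Lemma sombor_excess : sombor R e = n%:R * weight R 2 2 + excess_profile R (medges e).
Proof.
rewrite /excess_profile -sum_edges_by_class //; last exact: excess_sym.
have -> : sombor R e = \sum_(p in edges e) (weight R 2 2 + excess R (D p.1) (D p.2)).
  by apply: eq_bigr => p _; rewrite /excess addrC subrK unlock.
case: e_chem => _ _ nE _.
by rewrite big_split sumr_const -[#|_|]/(nedges e) nE mulr_natl.
Qed.

Lemma excess_profile_ge_shares :
  3 / 2 * (nv e 3)%:R + 22 / 5 * (nv e 4)%:R <= excess_profile R (medges e).
Proof.
rewrite /excess_profile -sum_edges_by_class //; last exact: excess_sym.
have shares_le : \sum_(p in edges e) (share R (D p.1) + share R (D p.2))
                 <= \sum_(p in edges e) excess R (D p.1) (D p.2).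
  apply: ler_sum => p pE; apply: excess_ge_shares; rewrite ?deg_gt0 ?deg_le4 //.
  exact: leaves_not_adjacent.
apply: le_trans shares_le.
rewrite (sum_edges_endpoints (fun u => share R (D u))); last by case: e_chem.
rewrite (sum_vertices_by_class e_chem n_gt2 (fun d => share R d *+ d)) !big_cons big_nil /=.
have [_ h1 h2 h3 [h4 hv hm]] := degree_profile e_chem n_gt2.
have /(congr1 (fun k => k%:R : R)) : nv e 1 = (nv e 3 + 2 * nv e 4)%N by lia.
rewrite natrD natrM; lra.
Qed.

Lemma excess_profile_gt_alpha9 : ~ (alpha1 e \/ alpha2 e \/ alpha3 e \/ alpha9 e) ->
  excess R 1 2 *+ 2 + excess R 2 3 *+ 4 + excess R 3 3 < excess_profile R (medges e).
Proof.
case/(not_alpha_profile e_chem n_gt2) => [many_branches | [v4 v3 not_alpha9]].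
  apply: lt_le_trans excess_profile_ge_shares.
  have := ler0n R (nv e 3); have := ler0n R (nv e 4).
  case/orP: many_branches => ?;
    [have : 1 <= (nv e 4)%:R :> R by rewrite ler1n
    | have : 3 <= (nv e 3)%:R :> R by rewrite ler_nat];
  have := weight_bounds R; rewrite /excess; lra.
have [m11 h1 h2 h3 [h4 hv hm]] := degree_profile e_chem n_gt2.
have m33 := medges_diag_le e 3; rewrite v3 binn in m33.
by apply: excess_profile_two_branches; try split; lia.
Qed.

End SomborExcess.

Theorem theorem3p6 (R : realType) (n : nat) (hn : (7 <= n)%N)
  (G1 G2 G3 G4 G : rel 'I_n) :
  chem_unicyclic G1 -> alpha1 G1 ->
  chem_unicyclic G2 -> alpha3 G2 ->
  chem_unicyclic G3 -> alpha2 G3 ->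
  chem_unicyclic G4 -> alpha9 G4 ->
  chem_unicyclic G ->
  ~ (alpha1 G \/ alpha2 G \/ alpha3 G \/ alpha9 G) ->
  [/\ sombor R G1 < sombor R G2, sombor R G2 < sombor R G3,
      sombor R G3 < sombor R G4 & sombor R G4 < sombor R G].
Proof.
move=> C1 A1 C2 A3 C3 A2 C4 A9 CG not_alpha.
have n_gt2 : (2 < n)%N by lia.
rewrite !(sombor_excess R C1 n_gt2, sombor_excess R C2 n_gt2, sombor_excess R C3 n_gt2,
          sombor_excess R C4 n_gt2, sombor_excess R CG n_gt2).
rewrite (excess_profile_alpha1 R A1) (excess_profile_alpha3 R A3)
        (excess_profile_alpha2 R A2) (excess_profile_alpha9 R A9) !ltrD2l.
have [lt12 lt23 lt34] := excess_alpha_chain R.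
by split => //; apply: excess_profile_gt_alpha9.
Qed.
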